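(* Let $G=A_\Gamma$ be a large even Artin group, let $r\in V$ be a vertex, and let $G_1=A_{\Gamma\setminus\{r\}}$, viewed as the subgroup of $G$ generated by $V\setminus\{r\}$. If $g\in G_1$ satisfies $g^{-1}rg=r$, then $g=1$.
   Context: $A_\Gamma=\langle V\mid {}_{m_e}(uv)={}_{m_e}(vu),\ e=\{u,v\}\in E\rangle$ for a finite simple labelled graph $\Gamma$ with vertex set $V$, where ${}_m(uv)$ is the alternating product $uvu\cdots$ of length $m$; even means all labels are even, large means all labels are $\ge 3$. $\Gamma\setminus\{r\}$ is the full labelled subgraph on $V\setminus\{r\}$. *)

(* Artin groups given by presentations, encoded as words in
   the free monoid on V x {+1,-1} modulo the congruence generated by free
   cancellation and the Artin relations. *)
From mathcomp Require Import all_boot.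
From Stdlib Require Import Relations.Relation_Operators.
Set Implicit Arguments. Unset Strict Implicit. Unset Printing Implicit Defensive.

(* A letter (x, true) is the generator x, (x, false) is x^-1. *)
Definition word (V : Type) := seq (V * bool).

(* Labelled graph: m u v = 0 means no edge between u and v; otherwise
   {u,v} is an edge with label m u v. *)
Definition is_labelled_graph (V : finType) (m : V -> V -> nat) : Prop :=
  (forall u v, m u v = m v u) /\ (forall u, m u u = 0) /\
  (forall u v, m u v != 0 -> 2 <= m u v).

Definition is_edge (V : finType) (m : V -> V -> nat) (u v : V) : bool :=
  m u v != 0.

Definition large_even (V : finType) (m : V -> V -> nat) : Prop :=
  forall u v, is_edge m u v -> 3 <= m u v /\ ~~ odd (m u v).

Definition alt (V : Type) (n : nat) (u v : V) : word V :=
  mkseq (fun i => (if odd i then v else u, true)) n.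

Definition winv (V : Type) (w : word V) : word V :=
  rev (map (fun l => (l.1, ~~ l.2)) w).

Inductive artin_rule (V : finType) (m : V -> V -> nat) : word V -> word V -> Prop :=
  | rule_cancel (x : V) (b : bool) : artin_rule m [:: (x, b); (x, ~~ b)] [::]
  | rule_braid (u v : V) : is_edge m u v -> artin_rule m (alt (m u v) u v) (alt (m u v) v u).

Inductive artin_step (V : finType) (m : V -> V -> nat) : word V -> word V -> Prop :=
  | step_ctx (w1 w2 l r : word V) :
      artin_rule m l r -> artin_step m (w1 ++ l ++ w2) (w1 ++ r ++ w2).

Definition artin_eq (V : finType) (m : V -> V -> nat) : word V -> word V -> Prop :=
  clos_refl_sym_trans (word V) (artin_step m).

From mathcomp Require Import all_boot zify.
From Stdlib Require Import Relations.Relation_Operators.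
Set Implicit Arguments. Unset Strict Implicit. Unset Printing Implicit Defensive.

(* Write m(r, v) = 2 K_v for the neighbours v of r, put K_v = 2 for the other
   vertices, and let N be a common multiple of all K_v.  Reading a word from
   left to right, the height of a letter is c plus the exponent sum of r in the
   prefix before it, taken mod N.  Deleting every letter r^±1 and every letter
   v^±1 whose height is not a multiple of K_v is compatible with free
   cancellation and with all the relations: a relation between u, v <> r has
   even length, so deleting only the u's or only the v's from both sides leaves
   equal words, and each side of r v r v ... = v r v r ... (length 2 K_v) keeps
   exactly one v, since its v's sit at K_v consecutive heights.  Starting at
   height c = -1, the map sends g^-1 r g to g, as the letters of g^-1 all sit at
   height -1 and those of g at height 0, and K_v >= 2 by largeness; it sends r
   to the empty word. *)

Lemma artin_eq_ctx (V : finType) (m : V -> V -> nat) (u w a b : word V) :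
  artin_eq m a b -> artin_eq m (u ++ a ++ w) (u ++ b ++ w).
Proof.
elim=> [x y [w1 w2 l l' R] | x | x y _ IH | x y z _ IH1 _ IH2].
- by apply: rst_step; have := step_ctx (u ++ w1) (w2 ++ w) R; rewrite -!catA.
- exact: rst_refl.
- exact: rst_sym.
- exact: rst_trans IH2.
Qed.

Section AlternatingWords.
Variable V : Type.

Lemma alt_SS n (u v : V) : alt n.+2 u v = (u, true) :: (v, true) :: alt n u v.
Proof.
rewrite /alt /mkseq /= -[2]/(2 + 0) iotaDl -map_comp; congr [:: _, _ & _].
by apply: eq_map => j /=; rewrite negbK.
Qed.

Lemma all_alt (P : pred (V * bool)) n u v :
  P (u, true) -> P (v, true) -> all P (alt n u v).
Proof. by move=> Pu Pv; rewrite all_map; apply/allP => j _ /=; case: odd. Qed.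

Lemma filter_alt_double (p : pred (V * bool)) k u v :
  ~~ (p (u, true) && p (v, true)) ->
  filter p (alt k.*2 u v) = filter p (alt k.*2 v u).
Proof.
move=> puv; elim: k => // k IH.
by rewrite doubleS !alt_SS /= IH; case: (p (u, true)) (p (v, true)) puv => [] [].
Qed.

End AlternatingWords.

Lemma count_dvdn_iota_shift d c :
  count (dvdn d) (iota c.+1 d) = count (dvdn d) (iota c d).
Proof.
have := congr1 (count (dvdn d)) (iotaD c d 1); rewrite addn1 /= count_cat /=.
by rewrite addn0 (dvdn_addl _ (dvdnn d)) addnC => /addIn.
Qed.

Section HeightProjection.
Variables (V : finType) (m : V -> V -> nat) (r : V) (K : V -> nat) (N : nat).
Hypothesis K_dvd_N : forall x, K x %| N.

(* r^-1 adds N.-1 instead of subtracting 1, so heights stay in nat; they only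
   matter mod N. *)
Definition step (c : nat) (l : V * bool) : nat :=
  if l.1 == r then (if l.2 then c.+1 else c + N.-1) else c.

Definition height (c : nat) (w : word V) : nat := foldl step c w.

Definition kept (c : nat) (x : V) : bool := K x %| c.

Fixpoint proj (c : nat) (w : word V) : word V :=
  if w is l :: w' then
    (if (l.1 != r) && kept c l.1 then [:: l] else [::]) ++ proj (step c l) w'
  else [::].

Definition avoids_r (w : word V) : bool := all (fun l => l.1 != r) w.

Lemma proj_cat c w1 w2 : proj c (w1 ++ w2) = proj c w1 ++ proj (height c w1) w2.
Proof. by elim: w1 c => [|l w IH] c //=; rewrite IH catA. Qed.

Lemma step_mod c c' l : c = c' %[mod N] -> step c l = step c' l %[mod N].
Proof.
rewrite /step => E; case: ifP => // _.
by case: l.2; rewrite -?[c.+1]addn1 -?[c'.+1]addn1 -modnDml E modnDml.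
Qed.

Lemma kept_mod c c' x : c = c' %[mod N] -> kept c x = kept c' x.
Proof. by rewrite /kept /dvdn => E; rewrite -(modn_dvdm c (K_dvd_N x)) E modn_dvdm. Qed.

Lemma proj_mod w c c' : c = c' %[mod N] -> proj c w = proj c' w.
Proof.
elim: w c c' => [|l w IH] c c' E //=.
by rewrite (kept_mod _ E) (IH _ _ (step_mod l E)).
Qed.

Lemma height_avoids_r w c : avoids_r w -> height c w = c.
Proof. by elim: w => [|l w IH] //= /andP[l_r /IH]; rewrite /step (negbTE l_r). Qed.

Lemma proj_avoids_r w c : avoids_r w -> proj c w = [seq l <- w | kept c l.1].
Proof.
elim: w => [|l w IH] //= /andP[l_r /IH <-].
by rewrite /step l_r (negbTE l_r) /=; case: kept.
Qed.

Lemma avoids_r_winv w : avoids_r w -> avoids_r (winv w).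
Proof. by rewrite /avoids_r /winv all_rev all_map. Qed.

Lemma avoids_r_alt n u v : u != r -> v != r -> avoids_r (alt n u v).
Proof. exact: all_alt. Qed.

Section Neighbour.
Variable v : V.
Hypothesis v_r : v != r.

Lemma proj_alt_vr k c :
  proj c (alt k.*2 v r) = nseq (count (dvdn (K v)) (iota c k)) (v, true).
Proof.
elim: k c => [|k IH] c //.
by rewrite doubleS alt_SS /= /step v_r (negbTE v_r) eqxx IH /kept; case: dvdn.
Qed.

Lemma proj_alt_rv k c :
  proj c (alt k.*2 r v) = nseq (count (dvdn (K v)) (iota c.+1 k)) (v, true).
Proof.
elim: k c => [|k IH] c //.
by rewrite doubleS alt_SS /= /step eqxx (negbTE v_r) /= IH /kept; case: dvdn.
Qed.

Lemma proj_braid_r c : proj c (alt (K v).*2 r v) = proj c (alt (K v).*2 v r).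
Proof. by rewrite proj_alt_vr proj_alt_rv count_dvdn_iota_shift. Qed.

Lemma height_braid_r k c : height c (alt k.*2 r v) = height c (alt k.*2 v r).
Proof.
elim: k c => [|k IH] c //.
rewrite doubleS !alt_SS -![height _ (_ :: _ :: _)]/(height (step (step _ _) _) _).
by rewrite /step /= (negbTE v_r) eqxx IH.
Qed.

End Neighbour.

Hypothesis N_gt0 : 0 < N.
Hypothesis m_sym : forall u v, m u v = m v u.
Hypothesis m_rr : m r r = 0.
Hypothesis m_even : forall u v, is_edge m u v -> ~~ odd (m u v).
Hypothesis m_rK : forall v, is_edge m r v -> m r v = (K v).*2.

Lemma edge_r_neq v : is_edge m r v -> v != r.
Proof. by apply: contraTneq => ->; rewrite /is_edge m_rr. Qed.

Lemma height_rule l l' c : artin_rule m l l' -> height c l = height c l' %[mod N].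
Proof.
case=> [x b | u v uv].
  rewrite /height /= /step; case: eqP => // _.
  by case: b; rewrite /= ?addSnnS -?addnS prednK // modnDr.
case: (eqVneq u r) uv => [-> ru | u_r uv].
  by rewrite (m_rK ru) height_braid_r // edge_r_neq.
case: (eqVneq v r) uv => [-> ur | v_r uv].
  have ru : is_edge m r u by rewrite /is_edge m_sym.
  by rewrite m_sym (m_rK ru) height_braid_r // edge_r_neq.
by rewrite !height_avoids_r // avoids_r_alt.
Qed.

Lemma proj_rule l l' c : artin_rule m l l' -> artin_eq m (proj c l) (proj c l').
Proof.
case=> [x b | u v uv].
  rewrite /= /step; case: eqP => [_ | _]; first exact: rst_refl.
  rewrite /= cats0; case: kept; last exact: rst_refl.
  by apply: rst_step; apply: (step_ctx [::] [::] (rule_cancel m x b)).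
case: (eqVneq u r) uv => [-> ru | u_r uv].
  by rewrite (m_rK ru) proj_braid_r ?edge_r_neq //; apply: rst_refl.
case: (eqVneq v r) uv => [-> ur | v_r uv].
  have ru : is_edge m r u by rewrite /is_edge m_sym.
  by rewrite m_sym (m_rK ru) proj_braid_r ?edge_r_neq //; apply: rst_refl.
rewrite !proj_avoids_r ?avoids_r_alt //.
have [/andP[ku kv] | not_both] := boolP (kept c u && kept c v).
  rewrite !(all_filterP _) ?all_alt //.
  by apply: rst_step; have := step_ctx [::] [::] (rule_braid uv); rewrite !cats0.
rewrite -(even_halfK (m_even uv)) filter_alt_double //; exact: rst_refl.
Qed.

Lemma proj_artin_eq w w' c : artin_eq m w w' -> artin_eq m (proj c w) (proj c w').
Proof.
move=> ww'; elim: ww' c => [x y [w1 w2 l l' R] | x | x y _ IH | x y z _ IH1 _ IH2] c.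
- rewrite !proj_cat (proj_mod _ (height_rule _ R)); exact/artin_eq_ctx/proj_rule.
- exact: rst_refl.
- exact: rst_sym (IH c).
- exact: rst_trans (IH1 c) (IH2 c).
Qed.

Lemma proj_conj g : (forall x, 1 < K x) -> avoids_r g ->
  proj N.-1 (winv g ++ [:: (r, true)] ++ g) = g.
Proof.
move=> K_gt1 g_r; have g'_r := avoids_r_winv g_r.
rewrite proj_cat height_avoids_r // (proj_avoids_r _ g'_r) /= /step eqxx /=.
rewrite prednK // (proj_avoids_r _ g_r).
have -> : [seq l <- winv g | kept N.-1 l.1] = [::].
  rewrite (eq_in_filter (a2 := pred0)) ?filter_pred0 // => l _.
  apply/negbTE/negP => KN1; have := dvdn_addr 1 KN1.
  by rewrite addn1 prednK // K_dvd_N dvdn1 => /esym/eqP K1; have := K_gt1 l.1; rewrite K1.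
by apply/all_filterP/allP => l _; apply: K_dvd_N.
Qed.

End HeightProjection.

Theorem lemma4p10 (V : finType) (m : V -> V -> nat) (r : V) (g : word V) :
  is_labelled_graph m -> large_even m ->
  (* g lies in G_1 = subgroup generated by V \ {r} *)
  all (fun l => l.1 != r) g ->
  artin_eq m (winv g ++ [:: (r, true)] ++ g) [:: (r, true)] ->
  artin_eq m g [::].
Proof.
move=> [m_sym [m_diag _]] large g_r conj_g.
pose K x := if is_edge m r x then (m r x)./2 else 2.
pose N := \prod_(x : V) K x.
have m_even u v : is_edge m u v -> ~~ odd (m u v) by case/large.
have m_rK v : is_edge m r v -> m r v = (K v).*2.
  by move=> rv; rewrite /K rv even_halfK // m_even.
have K_gt1 x : 1 < K x.
  rewrite /K; case: ifP => // rx; have [+ _] := large _ _ rx.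
  by rewrite (m_rK _ rx) /K rx; lia.
have K_dvd_N x : K x %| N by rewrite /N (bigD1 x) //= dvdn_mulr.
have N_gt0 : 0 < N by apply: prodn_gt0 => x; apply: ltnW.
have := proj_artin_eq K_dvd_N N_gt0 m_sym (m_diag r) m_even m_rK N.-1 conj_g.
by rewrite proj_conj //= eqxx.
Qed.
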